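(* Let $\Phi(z)=\frac{2z}{1+|z|^2}$. For $(\omega,s)\in\mathbb S^1\times(-1,1)$, let $\alpha\in(-\pi/2,\pi/2)$ and $\beta\in\mathbb S^1$ be determined by $\cos\alpha=\frac{1-s^2}{1+s^2}$, $\sin\alpha=\frac{-2s}{1+s^2}$, $\omega+\frac\pi2=\beta+\alpha+\pi$, and let $u(t)=\frac{1-s^2}{1+s^2}\tanh t$. Then $$\Phi(\gamma^{\mathrm v}_{\omega,s}(t))=\gamma^E_{\beta,\alpha}(u(t)),\quad t\in\mathbb R,\qquad\text{and}\qquad\frac{du}{dt}=\frac{1+s^2}{1-s^2}\,x^2(\gamma^{\mathrm v}_{\omega,s}(t)).$$ Moreover, in horocyclic coordinates, for $(\beta,a)\in\mathbb S^1\times\mathbb R$ and $t_0=-\log\sqrt{1+a^2}$, $$\Phi(\gamma_{\beta,a}(t+t_0))=\gamma^E_{\beta,\tan^{-1}a}\big(u(t)\big),\qquad u(t)=(1+a^2)^{-1/2}\tanh t.$$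
   Context: $x(z)=\frac{1-|z|^2}{1+|z|^2}$. Vertex parameterization of hyperbolic geodesics (Poincaré metric $\frac{4|dz|^2}{(1-|z|^2)^2}$ on the open unit disk): $\gamma^{\mathrm v}_{\omega,s}(t)=e^{i\omega}\frac{s+i\tanh(t/2)}{1+is\tanh(t/2)}$. Horocyclic parameterization: $\gamma_{\beta,a}(t)=e^{i\beta}\frac{(2+ia)\tanh(t/2)+ia}{ia\tanh(t/2)-2+ia}$. Euclidean geodesics (lines) in fan-beam coordinates: $\gamma^E_{\beta,\alpha}(u)=e^{i(\beta+\alpha+\pi)}(u+i\sin\alpha)$, $u\in[-\cos\alpha,\cos\alpha]$. *)

From Stdlib Require Import Reals.
From Coquelicot Require Import Coquelicot.

Open Scope R_scope.

Definition cis (theta : R) : C := (cos theta, sin theta).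

Definition Ci : C := (0, 1).

Definition xfun (z : C) : R := (1 - (Cmod z) ^ 2) / (1 + (Cmod z) ^ 2).

Definition Phi (z : C) : C := Cdiv (Cmult (RtoC 2) z) (RtoC (1 + (Cmod z) ^ 2)).

Definition gamma_v (omega s t : R) : C :=
  Cmult (cis omega)
    (Cdiv (Cplus (RtoC s) (Cmult Ci (RtoC (tanh (t / 2)))))
          (Cplus (RtoC 1) (Cmult Ci (RtoC (s * tanh (t / 2)))))).

Definition gamma_h (beta a t : R) : C :=
  Cmult (cis beta)
    (Cdiv (Cplus (Cmult (Cplus (RtoC 2) (Cmult Ci (RtoC a))) (RtoC (tanh (t / 2))))
                 (Cmult Ci (RtoC a)))
          (Cplus (Cminus (Cmult Ci (RtoC (a * tanh (t / 2)))) (RtoC 2))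
                 (Cmult Ci (RtoC a)))).

Definition gamma_E (beta alpha u : R) : C :=
  Cmult (cis (beta + alpha + PI)) (Cplus (RtoC u) (Cmult Ci (RtoC (sin alpha)))).

From Stdlib Require Import Reals Psatz.
From Coquelicot Require Import Coquelicot.
Open Scope R_scope.

(* Phi commutes with rotations, so for the vertex parameterization it suffices to
   take omega = 0, i.e. z = (s + i tau) / (1 + i s tau) with tau = tanh (t/2).  A direct
   computation gives Phi z = 2s/(1+s^2) + i (1-s^2)/(1+s^2) * 2tau/(1+tau^2) and
   x z = (1-s^2)/(1+s^2) * (1-tau^2)/(1+tau^2), and the half-argument formulas turn
   these into tanh t and sech t, with (1-s^2)/(1+s^2) = cos alpha: the image is the
   chord traversed by u = cos alpha * tanh t, and u' = cos alpha * sech^2 t = x^2 / cos alpha.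
   Shifted by t0, the horocyclic geodesic is the vertex geodesic with
   omega = beta + atan a + pi/2 and s = -tan (atan a / 2), so the second statement
   follows from the first. *)

Lemma cosh_pos x : 0 < cosh x.
Proof. unfold cosh; pose proof (exp_pos x); pose proof (exp_pos (- x)); lra. Qed.

Lemma tanh_half_exp x : tanh (x / 2) = (exp x - 1) / (exp x + 1).
Proof.
  assert (Hx : exp x = exp (x / 2) * exp (x / 2)) by (rewrite <- exp_plus; f_equal; field).
  pose proof (exp_pos (x / 2)).
  unfold tanh, sinh, cosh; rewrite Hx, exp_Ropp; field; nra.
Qed.

Lemma tanh_double_half x : 2 * tanh (x / 2) / (1 + tanh (x / 2) ^ 2) = tanh x.
Proof.
  pose proof (exp_pos x).
  rewrite tanh_half_exp; unfold tanh, sinh, cosh; rewrite exp_Ropp.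
  field; nra.
Qed.

Lemma sech_half x : (1 - tanh (x / 2) ^ 2) / (1 + tanh (x / 2) ^ 2) = / cosh x.
Proof.
  pose proof (exp_pos x).
  rewrite tanh_half_exp; unfold cosh; rewrite exp_Ropp.
  field; nra.
Qed.

Lemma is_derive_tanh x : is_derive tanh x (/ cosh x ^ 2).
Proof.
  pose proof (exp_pos x); pose proof (exp_pos (- x)).
  unfold tanh, sinh, cosh; auto_derive.
  - lra.
  - rewrite exp_Ropp; field; split; nra.
Qed.

Lemma pos_add_sqr_neq0 x y : 0 < x -> x + y * y <> 0.
Proof. nra. Qed.

(* Rational parametrization of the hyperbola c^2 - a^2 = 1 by m = a + c: it turns
   identities involving sqrt (1 + a^2) into rational ones that field can check. *)
Lemma sqrt_1_plus_sqr_param a :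
  exists m, 0 < m /\ a = (m ^ 2 - 1) / (2 * m) /\ sqrt (1 + a ^ 2) = (m ^ 2 + 1) / (2 * m).
Proof.
  assert (Hc : 0 < sqrt (1 + a ^ 2)) by (apply sqrt_lt_R0; nra).
  assert (Hca : sqrt (1 + a ^ 2) ^ 2 = 1 + a ^ 2) by (apply pow2_sqrt; nra).
  exists (a + sqrt (1 + a ^ 2)).
  assert (Hm : 0 < a + sqrt (1 + a ^ 2)) by nra.
  split; [exact Hm | split; field_simplify_eq; nra].
Qed.

Lemma cis_add x y : cis (x + y) = Cmult (cis x) (cis y).
Proof.
  unfold cis; rewrite cos_plus, sin_plus.
  apply injective_projections; simpl; ring.
Qed.

Lemma cis_PI2 : cis (PI / 2) = Ci.
Proof. unfold cis, Ci; rewrite cos_PI2, sin_PI2; reflexivity. Qed.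

Lemma cis_2PI_mult (k : Z) : cis (2 * PI * IZR k) = 1%C.
Proof.
  assert (Hsin : sin (IZR k * PI) = 0) by (apply sin_eq_0_1; exists k; reflexivity).
  replace (2 * PI * IZR k) with (2 * (IZR k * PI)) by ring.
  unfold cis; rewrite cos_2a_sin, sin_2a, Hsin.
  apply injective_projections; simpl; ring.
Qed.

Lemma Cmod_cis x : Cmod (cis x) = 1.
Proof.
  unfold Cmod, cis; cbn [fst snd].
  replace (cos x ^ 2 + sin x ^ 2) with 1 by (rewrite <- (sin2_cos2 x); unfold Rsqr; ring).
  exact sqrt_1.
Qed.

Lemma Cmod_pair_sqr x y : Cmod (x, y) ^ 2 = x ^ 2 + y ^ 2.
Proof. unfold Cmod; simpl; apply pow2_sqrt; nra. Qed.

Lemma Phi_cis_mult w z : Phi (Cmult (cis w) z) = Cmult (cis w) (Phi z).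
Proof.
  assert (Hz : 0 < 1 + Cmod z ^ 2) by (pose proof (Cmod_ge_0 z); nra).
  unfold Phi; rewrite Cmod_mult, Cmod_cis, Rmult_1_l.
  field; intros H; apply RtoC_inj in H; lra.
Qed.

Lemma xfun_cis_mult w z : xfun (Cmult (cis w) z) = xfun z.
Proof. unfold xfun; rewrite Cmod_mult, Cmod_cis, Rmult_1_l; reflexivity. Qed.

Lemma Phi_pair x y :
  Phi (x, y) = (2 * x / (1 + x ^ 2 + y ^ 2), 2 * y / (1 + x ^ 2 + y ^ 2)).
Proof.
  unfold Phi; rewrite Cmod_pair_sqr.
  assert (0 < 1 + (x ^ 2 + y ^ 2)) by nra.
  apply injective_projections; simpl; field; nra.
Qed.

Lemma xfun_pair x y : xfun (x, y) = (1 - x ^ 2 - y ^ 2) / (1 + x ^ 2 + y ^ 2).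
Proof. unfold xfun; rewrite Cmod_pair_sqr; f_equal; ring. Qed.

Definition vertex_arc (s tau : R) : C :=
  Cdiv (Cplus (RtoC s) (Cmult Ci (RtoC tau)))
       (Cplus (RtoC 1) (Cmult Ci (RtoC (s * tau)))).

Lemma gamma_v_vertex_arc omega s t :
  gamma_v omega s t = Cmult (cis omega) (vertex_arc s (tanh (t / 2))).
Proof. reflexivity. Qed.

Lemma vertex_arc_pair s tau :
  vertex_arc s tau =
  (s * (1 + tau ^ 2) / (1 + (s * tau) ^ 2), tau * (1 - s ^ 2) / (1 + (s * tau) ^ 2)).
Proof.
  assert (0 < 1 + (s * tau) ^ 2) by nra.
  unfold vertex_arc, Ci; apply injective_projections; simpl; field; nra.
Qed.

Lemma Phi_vertex_arc s tau :
  Phi (vertex_arc s tau) =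
  (2 * s / (1 + s ^ 2), (1 - s ^ 2) / (1 + s ^ 2) * (2 * tau / (1 + tau ^ 2))).
Proof.
  rewrite vertex_arc_pair, Phi_pair.
  assert (0 < 1 + (s * tau) ^ 2) by nra.
  assert (0 < 1 + s ^ 2) by nra.
  assert (0 < 1 + tau ^ 2) by nra.
  apply injective_projections; simpl; field; repeat split; nra.
Qed.

Lemma xfun_vertex_arc s tau :
  xfun (vertex_arc s tau) = (1 - s ^ 2) / (1 + s ^ 2) * ((1 - tau ^ 2) / (1 + tau ^ 2)).
Proof.
  rewrite vertex_arc_pair, xfun_pair.
  assert (0 < 1 + (s * tau) ^ 2) by nra.
  assert (0 < 1 + s ^ 2) by nra.
  assert (0 < 1 + tau ^ 2) by nra.
  field; repeat split; nra.
Qed.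

Lemma Phi_gamma_v omega s t :
  Phi (gamma_v omega s t) =
  Cmult (cis (omega + PI / 2))
    (Cplus (RtoC ((1 - s ^ 2) / (1 + s ^ 2) * tanh t))
           (Cmult Ci (RtoC (- 2 * s / (1 + s ^ 2))))).
Proof.
  rewrite gamma_v_vertex_arc, Phi_cis_mult, Phi_vertex_arc, tanh_double_half.
  rewrite cis_add, cis_PI2, <- Cmult_assoc; f_equal.
  assert (0 < 1 + s ^ 2) by nra.
  unfold Ci; apply injective_projections; simpl; field; lra.
Qed.

Lemma xfun_gamma_v omega s t :
  xfun (gamma_v omega s t) = (1 - s ^ 2) / (1 + s ^ 2) / cosh t.
Proof.
  rewrite gamma_v_vertex_arc, xfun_cis_mult, xfun_vertex_arc, sech_half; reflexivity.
Qed.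

Definition horo_arc (a tau : R) : C :=
  Cdiv (Cplus (Cmult (Cplus (RtoC 2) (Cmult Ci (RtoC a))) (RtoC tau)) (Cmult Ci (RtoC a)))
       (Cplus (Cminus (Cmult Ci (RtoC (a * tau))) (RtoC 2)) (Cmult Ci (RtoC a))).

Lemma gamma_h_horo_arc beta a t :
  gamma_h beta a t = Cmult (cis beta) (horo_arc a (tanh (t / 2))).
Proof. reflexivity. Qed.

(* -tan (atan a / 2): the vertex parameter s whose fan-beam angle is atan a. *)
Definition horo_vertex_param (a : R) : R := - a / (1 + sqrt (1 + a ^ 2)).

Lemma gamma_h_vertex_shift beta a t :
  gamma_h beta a (t - ln (sqrt (1 + a ^ 2))) =
  gamma_v (beta + atan a + PI / 2) (horo_vertex_param a) t.
Proof.
  rewrite gamma_h_horo_arc, gamma_v_vertex_arc, !cis_add, cis_PI2, <- !Cmult_assoc.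
  f_equal.
  assert (Hc : 0 < sqrt (1 + a ^ 2)) by (apply sqrt_lt_R0; nra).
  assert (Hshift : exp (t - ln (sqrt (1 + a ^ 2))) = exp t / sqrt (1 + a ^ 2)).
  { unfold Rminus; rewrite exp_plus, exp_Ropp, exp_ln by exact Hc; reflexivity. }
  unfold horo_vertex_param, cis; rewrite cos_atan, sin_atan, Rsqr_pow2, !tanh_half_exp, Hshift.
  destruct (sqrt_1_plus_sqr_param a) as (m & Hm & Ha & Hcm).
  rewrite Hcm; clear Hc Hcm Hshift; subst a.
  pose proof (exp_pos t); set (E := exp t) in *; clearbody E.
  unfold horo_arc, vertex_arc, Ci; apply injective_projections; simpl; field.
  all: repeat split;
    first [ nra | apply pos_add_sqr_neq0; repeat apply Rmult_lt_0_compat; nra ].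
Qed.

Lemma horo_vertex_param_cos a :
  (1 - horo_vertex_param a ^ 2) / (1 + horo_vertex_param a ^ 2) = / sqrt (1 + a ^ 2).
Proof.
  unfold horo_vertex_param.
  destruct (sqrt_1_plus_sqr_param a) as (m & Hm & Ha & Hcm).
  rewrite Hcm; clear Hcm; subst a.
  field; repeat split; nra.
Qed.

Lemma horo_vertex_param_sin a :
  - 2 * horo_vertex_param a / (1 + horo_vertex_param a ^ 2) = sin (atan a).
Proof.
  unfold horo_vertex_param; rewrite sin_atan, Rsqr_pow2.
  destruct (sqrt_1_plus_sqr_param a) as (m & Hm & Ha & Hcm).
  rewrite Hcm; clear Hcm; subst a.
  field; repeat split; nra.
Qed.

Theorem proposition3p11 :
  (forall omega s alpha beta : R,
     -1 < s < 1 ->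
     - (PI / 2) < alpha < PI / 2 ->
     cos alpha = (1 - s ^ 2) / (1 + s ^ 2) ->
     sin alpha = (- 2 * s) / (1 + s ^ 2) ->
     (exists k : Z, omega + PI / 2 = beta + alpha + PI + 2 * PI * IZR k) ->
     let u := fun t : R => (1 - s ^ 2) / (1 + s ^ 2) * tanh t in
     forall t : R,
       Phi (gamma_v omega s t) = gamma_E beta alpha (u t) /\
       is_derive u t ((1 + s ^ 2) / (1 - s ^ 2) * (xfun (gamma_v omega s t)) ^ 2))
  /\
  (forall beta a : R,
     let t0 := - ln (sqrt (1 + a ^ 2)) in
     let u := fun t : R => / sqrt (1 + a ^ 2) * tanh t in
     forall t : R,
       Phi (gamma_h beta a (t + t0)) = gamma_E beta (atan a) (u t)).
Proof.
  split.
  (* Only sin alpha enters; cos alpha and the range of alpha merely pin alpha down. *)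
  - intros omega s alpha beta Hs _ _ Hsin [k Hk] u t; unfold u; split.
    + rewrite Phi_gamma_v, Hk, cis_add, cis_2PI_mult, Cmult_1_r, <- Hsin.
      reflexivity.
    + rewrite xfun_gamma_v.
      replace ((1 + s ^ 2) / (1 - s ^ 2) * ((1 - s ^ 2) / (1 + s ^ 2) / cosh t) ^ 2)
        with ((1 - s ^ 2) / (1 + s ^ 2) * / cosh t ^ 2).
      * apply is_derive_scal, is_derive_tanh.
      * pose proof (cosh_pos t); field; repeat split; nra.
  - intros beta a t0 u t; unfold u.
    change (t + t0) with (t - ln (sqrt (1 + a ^ 2))).
    rewrite gamma_h_vertex_shift, Phi_gamma_v, horo_vertex_param_cos, horo_vertex_param_sin.
    unfold gamma_E; replace (beta + atan a + PI / 2 + PI / 2) with (beta + atan a + PI) by field.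
    reflexivity.
Qed.
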